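(* Let $(\mathcal M,\mathrm d_{\mathcal M})$ be a metric space with finite doubling constant $\lambda$ and doubling dimension $d_{\mathcal M}=\log_2\lambda$. There is a constant $c>0$ depending only on $\lambda$ such that the following holds. Let $\alpha\ge2$, $\epsilon\in(0,1)$, $k,m\ge 1$, $X\in\mathcal M^m$, let $X_k\in\mathcal M^k$ be an $\alpha$-approximate $k$-simplification of $X$, and write $D=\mathrm d_{dF}(X,X_k)$. Then there is a finite set $\mathcal C\subset\mathcal M^k$ with $|\mathcal C|\le\big(c\,k\,\log_2(\alpha/\epsilon)(\alpha/\epsilon)^{d_{\mathcal M}}\big)^k$ such that the following holds for every $q\in\mathcal M^k$. Define $X^*=X_k$ if $\mathrm d_{dF}(q,X_k)\le\frac{\epsilon}{2\alpha}D$ or $\mathrm d_{dF}(q,X_k)\ge\frac{2(\alpha+1)}{\epsilon}D$, and otherwise let $X^*$ be any element of $\mathcal C$ minimizing $\mathrm d_{dF}(q,\cdot)$ over $\mathcal C$. Then $\Delta:=\mathrm d_{dF}(q,X^* )+\mathrm d_{dF}(X^*,X)$ satisfies \[ \mathrm d_{dF}(q,X)\le\Delta\le(1+\epsilon)\,\mathrm d_{dF}(q,X). \]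
   Context: A curve of complexity $m$ in a metric space $(\mathcal M,\mathrm d_{\mathcal M})$ is a sequence $p=p_1,\dots,p_m$ of points of $\mathcal M$; $\mathcal M^m$ denotes the set of such curves. For $p\in\mathcal M^m$ and $q\in\mathcal M^k$, a traversal of $p$ and $q$ is a sequence of index pairs $(i_1,j_1),\dots,(i_t,j_t)$ with $(i_1,j_1)=(1,1)$, $(i_t,j_t)=(m,k)$, and for every $u<t$: $i_{u+1}-i_u\in\{0,1\}$, $j_{u+1}-j_u\in\{0,1\}$ and $(i_{u+1}-i_u)+(j_{u+1}-j_u)\ge 1$. Its cost is $\max_u \mathrm d_{\mathcal M}(p_{i_u},q_{j_u})$. The discrete Fréchet distance $\mathrm d_{dF}(p,q)$ is the minimum cost over all traversals of $p$ and $q$. For $p\in\mathcal M^m$ and $\alpha\ge 1$, a curve $p'\in\mathcal M^k$ is an $\alpha$-approximate $k$-simplification of $p$ if $\mathrm d_{dF}(p,p')\le\alpha\,\mathrm d_{dF}(p,q)$ for every $q\in\mathcal M^k$. The doubling constant $\lambda$ of $\mathcal M$ is the smallest integer such that every closed ball of radius $r>0$ can be covered by at most $\lambda$ closed balls of radius $r/2$ centered at points of $\mathcal M$. *)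

From Stdlib Require Import Reals Lra List ClassicalEpsilon.
Import ListNotations.
Open Scope R_scope.

Definition is_metric {M : Type} (d : M -> M -> R) : Prop :=
  (forall x y, 0 <= d x y) /\
  (forall x y, d x y = 0 <-> x = y) /\
  (forall x y, d x y = d y x) /\
  (forall x y z, d x z <= d x y + d y z).

Definition doubling_cover {M : Type} (d : M -> M -> R) (n : nat) : Prop :=
  forall (x : M) (r : R), 0 < r ->
    exists centers : list M, (length centers <= n)%nat /\
      forall y, d x y <= r -> exists c, In c centers /\ d c y <= r / 2.

Definition doubling_constant {M : Type} (d : M -> M -> R) (lam : nat) : Prop :=
  doubling_cover d lam /\ forall n, doubling_cover d n -> (lam <= n)%nat.

Definition log2 (x : R) : R := ln x / ln 2.

(** Curves are lists of points; a curve of complexity m has length m.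
    Indices are 0-based: p_1..p_m of the paper are positions 0..m-1. *)

Definition valid_step (a b : nat * nat) : Prop :=
  let '(i, j) := a in let '(i', j') := b in
  (i' = i \/ i' = S i) /\ (j' = j \/ j' = S j) /\ (i' + j' >= S (i + j))%nat.

Fixpoint steps_ok (t : list (nat * nat)) : Prop :=
  match t with
  | a :: ((b :: _) as t') => valid_step a b /\ steps_ok t'
  | _ => True
  end.

Definition traversal {M : Type} (p q : list M) (t : list (nat * nat)) : Prop :=
  hd_error t = Some (0%nat, 0%nat) /\
  last t (0%nat, 0%nat) = (pred (length p), pred (length q)) /\
  t <> [] /\ steps_ok t.

Definition pair_dist {M : Type} (d : M -> M -> R) (p q : list M) (ij : nat * nat) : R :=
  match nth_error p (fst ij), nth_error q (snd ij) with
  | Some a, Some b => d a b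
  | _, _ => 0
  end.

Definition trav_cost {M : Type} (d : M -> M -> R) (p q : list M) (t : list (nat * nat)) : R :=
  fold_right Rmax 0 (map (pair_dist d p q) t).

Definition is_dF {M : Type} (d : M -> M -> R) (p q : list M) (r : R) : Prop :=
  (exists t, traversal p q t /\ trav_cost d p q t = r) /\
  (forall t, traversal p q t -> r <= trav_cost d p q t).

(** Discrete Fréchet distance: the minimum cost over all traversals
    (chosen via classical epsilon; it exists for nonempty curves). *)
Definition dF {M : Type} (d : M -> M -> R) (p q : list M) : R :=
  epsilon (inhabits 0) (is_dF d p q).

Definition approx_simplification {M : Type} (d : M -> M -> R)
    (alpha : R) (k : nat) (p p' : list M) : Prop :=
  length p' = k /\
  forall q : list M, length q = k -> dF d p p' <= alpha * dF d p q.

From Stdlib Require Import Reals Lra Lia List ClassicalEpsilon Classical.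
Import ListNotations.
Open Scope R_scope.

(* Write D = d_dF(X, X_k), t = d_dF(q, X_k) and x = d_dF(q, X). The triangle inequality
   and the approximation property D <= alpha x give t <= (alpha + 1) x, and settle the
   two outer regimes directly with X* = X_k. In the inner regime t lies in one of
   O(log (alpha / eps)) dyadic scales r above eps D / (2 alpha); around each vertex of
   X_k and at each such scale, doubling yields a net of mesh r / 2^n, 2^n ~ alpha / eps,
   with lam^n points. Snapping every vertex of q into the net gives a curve Y over the
   net with 3 alpha d_dF(q, Y) <= eps t <= eps (alpha + 1) x, so the nearest curve X*
   among all k-vertex curves over the net adds at most eps x to x. *)

Lemma neq_nil_of_length {A} (l : list A) n : length l = n -> (1 <= n)%nat -> l <> [].
Proof. intros <- Hn ->; simpl in Hn; lia. Qed.

Lemma skipn_nth_error {A} (l : list A) i a :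
  nth_error l i = Some a -> skipn i l = a :: skipn (S i) l.
Proof.
  revert i; induction l as [|x l IH]; intros [|i] H; simpl in *; try discriminate; auto.
  now injection H as ->.
Qed.

Lemma skipn_eq_cons {A} (l l' : list A) i a :
  skipn i l = a :: l' -> nth_error l i = Some a /\ skipn (S i) l = l'.
Proof.
  revert i; induction l as [|x l IH]; intros [|i] H; simpl in *; try discriminate; auto.
  now injection H as -> ->.
Qed.

Lemma last_cons_default {A} (z : A) t x y : last (z :: t) x = last (z :: t) y.
Proof. revert z; induction t as [|w t IH]; intros z; [reflexivity|apply IH]. Qed.

Lemma steps_ok_le_last t z : steps_ok (z :: t) ->
  (fst z <= fst (last (z :: t) z) /\ snd z <= snd (last (z :: t) z))%nat.
Proof.
  revert z; induction t as [|w t IH]; intros z Hs; [simpl; lia|].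
  destruct Hs as [Hzw Hs]; specialize (IH w Hs).
  change (last (z :: w :: t) z) with (last (w :: t) z); rewrite (last_cons_default w t z w).
  destruct z, w; simpl in *; lia.
Qed.

Lemma exists_min_in_list (P : R -> Prop) (L : list R) : (exists v, In v L /\ P v) ->
  exists v, In v L /\ P v /\ forall w, In w L -> P w -> v <= w.
Proof.
  induction L as [|x L IH]; [intros [v [[] _]]|intros Hex].
  destruct (classic (exists v, In v L /\ P v)) as [HL|HL].
  - destruct (IH HL) as [u [Hu [HPu Hmin]]].
    destruct (classic (P x /\ x < u)) as [[HPx Hxu]|Hx].
    + exists x; split; [now left|split; [exact HPx|]].
      intros w [<-|Hw] HPw; [lra|specialize (Hmin w Hw HPw); lra].
    + exists u; split; [now right|split; [exact HPu|]].
      intros w [<-|Hw] HPw; [|now apply Hmin].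
      apply Rnot_lt_le; intros Hwu; now apply Hx.
  - destruct Hex as [v [[<-|Hv] HPv]]; [|exfalso; eauto].
    exists x; split; [now left|split; [exact HPv|]].
    intros w [<-|Hw] HPw; [lra|exfalso; eauto].
Qed.

Section Frechet.
Context {M : Type} (d : M -> M -> R).
Hypothesis d_nonneg : forall x y, 0 <= d x y.
Hypothesis d_sym : forall x y, d x y = d y x.
Hypothesis d_triangle : forall x y z, d x z <= d x y + d y z.

(* Inductive reading of "some traversal of p and q has cost at most e":
   each constructor is the first step of such a traversal. *)
Inductive frechet_le (e : R) : list M -> list M -> Prop :=
| fle_single a b : d a b <= e -> frechet_le e [a] [b]
| fle_left a b p q : d a b <= e -> frechet_le e p (b :: q) -> frechet_le e (a :: p) (b :: q)
| fle_right a b p q : d a b <= e -> frechet_le e (a :: p) q -> frechet_le e (a :: p) (b :: q)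
| fle_both a b p q : d a b <= e -> frechet_le e p q -> frechet_le e (a :: p) (b :: q).

Lemma frechet_le_neq_nil e p q : frechet_le e p q -> p <> [] /\ q <> [].
Proof. now destruct 1; split. Qed.

Lemma frechet_le_head e a b p q : frechet_le e (a :: p) (b :: q) -> d a b <= e.
Proof. now inversion 1. Qed.

Lemma frechet_le_nonneg e p q : frechet_le e p q -> 0 <= e.
Proof. destruct 1 as [a b|a b|a b|a b]; specialize (d_nonneg a b); lra. Qed.

Lemma frechet_le_weaken e e' p q : e <= e' -> frechet_le e p q -> frechet_le e' p q.
Proof. intros Hee'; induction 1; constructor; auto; lra. Qed.

Lemma frechet_le_sym e p q : frechet_le e p q -> frechet_le e q p.
Proof.
  induction 1; [apply fle_single|apply fle_right|apply fle_left|apply fle_both];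
    rewrite 1?d_sym; auto.
Qed.

Lemma frechet_le_vertex e p q a : frechet_le e p q -> In a p -> exists b, In b q /\ d a b <= e.
Proof.
  induction 1 as [a' b|a' b p q Hab _ IH|a' b p q Hab _ IH|a' b p q Hab _ IH];
    simpl; intros Ha.
  - destruct Ha as [<-|[]]; eauto.
  - destruct Ha as [<-|Ha]; eauto.
  - destruct (IH Ha) as [c [Hc Hac]]; eauto.
  - destruct Ha as [<-|Ha]; [eauto|].
    destruct (IH Ha) as [c [Hc Hac]]; eauto.
Qed.

Lemma frechet_le_trans e1 e2 p q r :
  frechet_le e1 p q -> frechet_le e2 q r -> frechet_le (e1 + e2) p r.
Proof.
  assert (Hdist : forall a b c, d a b <= e1 -> d b c <= e2 -> d a c <= e1 + e2).
  { intros a b c Hab Hbc; specialize (d_triangle a b c); lra. }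
  revert p q r.
  enough (Hgen : forall n p q r, (length p + length q + length r <= n)%nat ->
            frechet_le e1 p q -> frechet_le e2 q r -> frechet_le (e1 + e2) p r) by eauto.
  intros n; induction n as [|n IH]; intros p q r Hn H1 H2.
  { destruct H1; simpl in Hn; lia. }
  destruct H1 as [a b Hab|a b p q Hab H1|a b p q Hab H1|a b p q Hab H1].
  - inversion H2 as [b' c Hbc|b' c q' r' Hbc H2'|b' c q' r' Hbc H2'|b' c q' r' Hbc H2']; subst.
    + apply fle_single; eauto.
    + now destruct (frechet_le_neq_nil _ _ _ H2').
    + apply fle_right; [eauto|]. apply (IH [a] [b] r'); [simpl in *; lia|now apply fle_single|auto].
    + now destruct (frechet_le_neq_nil _ _ _ H2').
  - destruct r as [|c r]; [now destruct (frechet_le_neq_nil _ _ _ H2)|].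
    apply fle_left; [exact (Hdist a b c Hab (frechet_le_head _ _ _ _ _ H2))|].
    apply (IH p (b :: q)); simpl in *; auto; lia.
  - inversion H2 as [b' c Hbc|b' c q' r' Hbc H2'|b' c q' r' Hbc H2'|b' c q' r' Hbc H2']; subst.
    + now destruct (frechet_le_neq_nil _ _ _ H1).
    + apply (IH (a :: p) q); simpl in *; auto; lia.
    + apply fle_right; [eauto|].
      apply (IH (a :: p) (b :: q)); [simpl in *; lia|now apply fle_right|auto].
    + apply fle_right; [eauto|]. apply (IH (a :: p) q); simpl in *; auto; lia.
  - inversion H2 as [b' c Hbc|b' c q' r' Hbc H2'|b' c q' r' Hbc H2'|b' c q' r' Hbc H2']; subst.
    + now destruct (frechet_le_neq_nil _ _ _ H1).
    + apply fle_left; [eauto|]. apply (IH p q); simpl in *; auto; lia.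
    + apply fle_right; [eauto|].
      apply (IH (a :: p) (b :: q)); [simpl in *; lia|now apply fle_both|auto].
    + apply fle_both; [eauto|]. apply (IH p q); simpl in *; auto; lia.
Qed.

Lemma pair_dist_le_trav_cost p q t z : In z t -> pair_dist d p q z <= trav_cost d p q t.
Proof.
  unfold trav_cost; induction t as [|w t IH]; intros Hz; [destruct Hz|simpl].
  destruct Hz as [<-|Hz]; [apply Rmax_l|eapply Rle_trans; [apply IH, Hz|apply Rmax_r]].
Qed.

Lemma trav_cost_le p q t e :
  0 <= e -> Forall (fun z => pair_dist d p q z <= e) t -> trav_cost d p q t <= e.
Proof. unfold trav_cost; intros He; induction 1; simpl; [lra|now apply Rmax_lub]. Qed.

Lemma pair_dist_skipn p q i j a b p' q' :
  skipn i p = a :: p' -> skipn j q = b :: q' -> pair_dist d p q (i, j) = d a b.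
Proof.
  intros Hp Hq; unfold pair_dist; simpl.
  now rewrite (proj1 (skipn_eq_cons _ _ _ _ Hp)), (proj1 (skipn_eq_cons _ _ _ _ Hq)).
Qed.

Definition path_within (p q : list M) (e : R) (z : nat * nat) (t : list (nat * nat)) : Prop :=
  steps_ok (z :: t) /\ last (z :: t) z = (pred (length p), pred (length q)) /\
  Forall (fun w => pair_dist d p q w <= e) (z :: t).

Lemma path_within_cons p q e z w t : valid_step z w -> pair_dist d p q z <= e ->
  path_within p q e w t -> path_within p q e z (w :: t).
Proof.
  intros Hzw Hz [Hs [Hl Hc]]; split; [now split|split; [|now constructor]].
  change (last (w :: t) z = (pred (length p), pred (length q))).
  now rewrite (last_cons_default w t z w).
Qed.

Lemma path_within_first p q e i j t : p <> [] -> q <> [] -> path_within p q e (i, j) t ->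
  exists a b, skipn i p = a :: skipn (S i) p /\ skipn j q = b :: skipn (S j) q /\ d a b <= e.
Proof.
  intros Hp Hq [Hs [Hl Hc]].
  pose proof (steps_ok_le_last t (i, j) Hs) as Hij; rewrite Hl in Hij; simpl in Hij.
  rewrite <- length_zero_iff_nil in Hp, Hq.
  destruct (nth_error p i) as [a|] eqn:Ha; [|apply nth_error_None in Ha; lia].
  destruct (nth_error q j) as [b|] eqn:Hb; [|apply nth_error_None in Hb; lia].
  exists a, b; split; [now apply skipn_nth_error|split; [now apply skipn_nth_error|]].
  apply Forall_inv in Hc; unfold pair_dist in Hc; simpl in Hc; now rewrite Ha, Hb in Hc.
Qed.

Lemma frechet_le_of_path p q e t z : p <> [] -> q <> [] -> path_within p q e z t ->
  frechet_le e (skipn (fst z) p) (skipn (snd z) q).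
Proof.
  intros Hp Hq; revert z; induction t as [|[i' j'] t IH]; intros [i j] Hpath;
    destruct (path_within_first _ _ _ _ _ _ Hp Hq Hpath) as [a [b [Hpi [Hqj Hab]]]];
    destruct Hpath as [Hs [Hl Hc]]; simpl; rewrite Hpi, Hqj.
  - injection Hl as -> ->; rewrite <- length_zero_iff_nil in Hp, Hq.
    rewrite !skipn_all2 by lia; now apply fle_single.
  - destruct Hs as [Hv Hs].
    change (last ((i', j') :: t) (i, j) = (pred (length p), pred (length q))) in Hl.
    rewrite (last_cons_default (i', j') t (i, j) (i', j')) in Hl.
    specialize (IH (i', j') (conj Hs (conj Hl (Forall_inv_tail Hc)))); simpl in IH.
    destruct Hv as [[-> | ->] [[-> | ->] Hsum]]; try lia; rewrite ?Hpi, ?Hqj in IH;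
      [apply fle_right|apply fle_left|apply fle_both]; assumption.
Qed.

Lemma frechet_le_of_traversal p q t : p <> [] -> q <> [] -> traversal p q t ->
  frechet_le (trav_cost d p q t) p q.
Proof.
  intros Hp Hq [Hh [Hl [_ Hs]]]; destruct t as [|z t]; [discriminate|]; injection Hh as ->.
  apply (frechet_le_of_path p q _ t (0, 0)%nat Hp Hq); split; [exact Hs|split; [exact Hl|]].
  apply Forall_forall; intros w Hw; now apply pair_dist_le_trav_cost.
Qed.

Lemma path_of_frechet_le p q e p' q' : frechet_le e p' q' ->
  forall i j, skipn i p = p' -> skipn j q = q' -> exists t, path_within p q e (i, j) t.
Proof.
  induction 1 as [a b Hab|a b p' q' Hab _ IH|a b p' q' Hab _ IH|a b p' q' Hab _ IH];
    intros i j Hpi Hqj; pose proof (pair_dist_skipn _ _ _ _ _ _ _ _ Hpi Hqj) as Hd;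
    destruct (skipn_eq_cons _ _ _ _ Hpi) as [_ Hpi'];
    destruct (skipn_eq_cons _ _ _ _ Hqj) as [_ Hqj'].
  - exists []; split; [exact I|split; [|constructor; [lra|constructor]]].
    apply (f_equal (@length M)) in Hpi, Hqj; rewrite length_skipn in Hpi, Hqj; simpl in *.
    f_equal; lia.
  - destruct (IH (S i) j Hpi' Hqj) as [t Ht]; exists ((S i, j) :: t).
    apply path_within_cons; [simpl; lia|lra|exact Ht].
  - destruct (IH i (S j) Hpi Hqj') as [t Ht]; exists ((i, S j) :: t).
    apply path_within_cons; [simpl; lia|lra|exact Ht].
  - destruct (IH (S i) (S j) Hpi' Hqj') as [t Ht]; exists ((S i, S j) :: t).
    apply path_within_cons; [simpl; lia|lra|exact Ht].
Qed.

Lemma traversal_of_frechet_le e p q : frechet_le e p q ->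
  exists t, traversal p q t /\ trav_cost d p q t <= e.
Proof.
  intros H; destruct (path_of_frechet_le p q e p q H 0 0 eq_refl eq_refl) as [t [Hs [Hl Hc]]].
  exists ((0, 0)%nat :: t); split.
  - split; [reflexivity|split; [exact Hl|split; [discriminate|exact Hs]]].
  - apply trav_cost_le; [eapply frechet_le_nonneg; eauto|exact Hc].
Qed.

Definition pair_dists (p q : list M) : list R := flat_map (fun a => map (d a) q) p.

Lemma in_pair_dists p q a b : In a p -> In b q -> In (d a b) (pair_dists p q).
Proof. intros Ha Hb; apply in_flat_map; exists a; split; [exact Ha|now apply in_map]. Qed.

Lemma Rmax_in_pair_dists a b p q p' q' v : In v (pair_dists p' q') ->
  incl p' (a :: p) -> incl q' (b :: q) -> In (Rmax (d a b) v) (pair_dists (a :: p) (b :: q)).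
Proof.
  intros Hv Hp Hq; apply Rmax_case; [apply in_pair_dists; now left|].
  apply in_flat_map in Hv as [a' [Ha' Hv]]; apply in_map_iff in Hv as [b' [<- Hb']].
  apply in_pair_dists; auto.
Qed.

(* Makes the infimum defining [dF] a minimum over the finite list [pair_dists p q]. *)
Lemma frechet_le_attained e p q : frechet_le e p q ->
  exists v, In v (pair_dists p q) /\ v <= e /\ frechet_le v p q.
Proof.
  induction 1 as [a b Hab|a b p q Hab _ IH|a b p q Hab _ IH|a b p q Hab _ IH].
  - exists (d a b); split; [apply in_pair_dists; now left|split; [exact Hab|]].
    apply fle_single; lra.
  - destruct IH as [v [Hv [Hve Hfv]]]; exists (Rmax (d a b) v); split; [|split].
    + apply (Rmax_in_pair_dists a b p q _ _ v Hv); intros x Hx; simpl; auto.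
    + now apply Rmax_lub.
    + apply fle_left; [apply Rmax_l|eapply frechet_le_weaken; [apply Rmax_r|exact Hfv]].
  - destruct IH as [v [Hv [Hve Hfv]]]; exists (Rmax (d a b) v); split; [|split].
    + apply (Rmax_in_pair_dists a b p q _ _ v Hv); intros x Hx; simpl; auto.
    + now apply Rmax_lub.
    + apply fle_right; [apply Rmax_l|eapply frechet_le_weaken; [apply Rmax_r|exact Hfv]].
  - destruct IH as [v [Hv [Hve Hfv]]]; exists (Rmax (d a b) v); split; [|split].
    + apply (Rmax_in_pair_dists a b p q _ _ v Hv); intros x Hx; simpl; auto.
    + now apply Rmax_lub.
    + apply fle_both; [apply Rmax_l|eapply frechet_le_weaken; [apply Rmax_r|exact Hfv]].
Qed.

Lemma frechet_le_exists p q : p <> [] -> q <> [] -> exists e, frechet_le e p q.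
Proof.
  revert q; induction p as [|a p IHp]; intros q Hp Hq; [congruence|].
  destruct p as [|a' p].
  - clear IHp Hp; induction q as [|b q IHq]; [congruence|].
    destruct q as [|b' q]; [exists (d a b); apply fle_single; lra|].
    destruct IHq as [e He]; [discriminate|]; exists (Rmax e (d a b)).
    apply fle_right; [apply Rmax_r|eapply frechet_le_weaken; [apply Rmax_l|exact He]].
  - destruct q as [|b q]; [congruence|].
    destruct (IHp (b :: q)) as [e He]; try discriminate; exists (Rmax e (d a b)).
    apply fle_left; [apply Rmax_r|eapply frechet_le_weaken; [apply Rmax_l|exact He]].
Qed.

Lemma is_dF_exists p q : p <> [] -> q <> [] -> exists r, is_dF d p q r.
Proof.
  intros Hp Hq; destruct (frechet_le_exists p q Hp Hq) as [e He].
  destruct (frechet_le_attained e p q He) as [v0 [Hv0 [_ Hfv0]]].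
  destruct (exists_min_in_list (fun v => frechet_le v p q) (pair_dists p q)) as [v [Hv [Hfv Hmin]]];
    [eauto|].
  exists v; split.
  - destruct (traversal_of_frechet_le v p q Hfv) as [t [Ht Hc]]; exists t; split; [exact Ht|].
    destruct (frechet_le_attained _ _ _ (frechet_le_of_traversal p q t Hp Hq Ht))
      as [u [Hu [Hut Hfu]]].
    specialize (Hmin u Hu Hfu); lra.
  - intros t Ht.
    destruct (frechet_le_attained _ _ _ (frechet_le_of_traversal p q t Hp Hq Ht))
      as [u [Hu [Hut Hfu]]].
    specialize (Hmin u Hu Hfu); lra.
Qed.

Lemma dF_is_dF p q : p <> [] -> q <> [] -> is_dF d p q (dF d p q).
Proof. intros Hp Hq; unfold dF; apply epsilon_spec, is_dF_exists; assumption. Qed.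

Lemma frechet_le_dF p q : p <> [] -> q <> [] -> frechet_le (dF d p q) p q.
Proof.
  intros Hp Hq; destruct (dF_is_dF p q Hp Hq) as [[t [Ht <-]] _].
  now apply frechet_le_of_traversal.
Qed.

Lemma dF_le_of_frechet_le e p q : frechet_le e p q -> dF d p q <= e.
Proof.
  intros H; destruct (frechet_le_neq_nil e p q H) as [Hp Hq].
  destruct (traversal_of_frechet_le e p q H) as [t [Ht Hc]].
  destruct (dF_is_dF p q Hp Hq) as [_ Hmin]; specialize (Hmin t Ht); lra.
Qed.

Lemma dF_nonneg p q : p <> [] -> q <> [] -> 0 <= dF d p q.
Proof. intros Hp Hq; eapply frechet_le_nonneg, frechet_le_dF; eassumption. Qed.

Lemma dF_sym p q : p <> [] -> q <> [] -> dF d p q = dF d q p.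
Proof.
  intros Hp Hq; apply Rle_antisym; apply dF_le_of_frechet_le, frechet_le_sym, frechet_le_dF;
    assumption.
Qed.

Lemma dF_triangle p q r : p <> [] -> q <> [] -> r <> [] -> dF d p r <= dF d p q + dF d q r.
Proof.
  intros Hp Hq Hr; apply dF_le_of_frechet_le.
  apply frechet_le_trans with q; now apply frechet_le_dF.
Qed.

End Frechet.

Section Nets.
Context {M : Type} (d : M -> M -> R).

Definition covers (L : list M) (r : R) (Y : M -> Prop) : Prop :=
  forall y, Y y -> exists c, In c L /\ d c y <= r.

Lemma covers_family {A} (S : list A) (N : nat) (r : A -> R) (Y : A -> M -> Prop) :
  (forall s, In s S -> exists L, (length L <= N)%nat /\ covers L (r s) (Y s)) ->
  exists L, (length L <= length S * N)%nat /\ forall s, In s S -> covers L (r s) (Y s).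
Proof.
  induction S as [|s S IH]; intros Hcov; [exists []; split; [simpl; lia|intros s []]|].
  destruct IH as [L1 [Hl1 H1]]; [intros s' Hs'; apply Hcov; now right|].
  destruct (Hcov s (or_introl eq_refl)) as [L2 [Hl2 H2]].
  exists (L2 ++ L1); split; [rewrite length_app; simpl; lia|].
  intros s' [<-|Hs'] y Hy;
    [destruct (H2 y Hy) as [c [Hc Hcy]]|destruct (H1 s' Hs' y Hy) as [c [Hc Hcy]]];
    exists c; split; auto; apply in_or_app; auto.
Qed.

Lemma dyadic_net lam n x r : doubling_cover d lam -> 0 < r ->
  exists L, (length L <= lam ^ n)%nat /\ covers L (r / 2 ^ n) (fun y => d x y <= r).
Proof.
  intros Hdbl Hr; induction n as [|n IH].
  { exists [x]; split; [simpl; lia|intros y Hy; exists x; split; [now left|simpl; lra]]. }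
  destruct IH as [L [Hl HL]].
  assert (Hrn : 0 < r / 2 ^ n) by (apply Rdiv_lt_0_compat; [exact Hr|apply pow_lt; lra]).
  destruct (covers_family L lam (fun _ => r / 2 ^ n / 2) (fun c y => d c y <= r / 2 ^ n))
    as [L' [Hl' HL']]; [intros c _; exact (Hdbl c _ Hrn)|].
  exists L'; split.
  - apply (Nat.le_trans _ _ _ Hl'); simpl; rewrite Nat.mul_comm; now apply Nat.mul_le_mono_l.
  - intros y Hy; destruct (HL y Hy) as [c [Hc Hcy]]; destruct (HL' c Hc y Hcy) as [c' [Hc' Hc'y]].
    exists c'; split; [exact Hc'|].
    replace (r / 2 ^ S n) with (r / 2 ^ n / 2) by (simpl; field; apply pow_nonzero; lra).
    exact Hc'y.
Qed.

Lemma doubling_cover_ge1 lam (x : M) :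
  (forall y, 0 <= d x y) -> doubling_cover d lam -> (1 <= lam)%nat.
Proof.
  intros Hpos Hdbl; destruct (Hdbl x (d x x + 1)) as [L [Hl HL]]; [specialize (Hpos x); lra|].
  destruct (HL x) as [c [Hc _]]; [lra|].
  destruct L; [destruct Hc|simpl in Hl; lia].
Qed.

Lemma snap_to_points (P : list M) e q : q <> [] ->
  (forall y, In y q -> exists c, In c P /\ d y c <= e) ->
  exists Y, length Y = length q /\ incl Y P /\ frechet_le d e q Y.
Proof.
  induction q as [|y q IH]; intros Hq Hnear; [congruence|].
  destruct (Hnear y (or_introl eq_refl)) as [c [Hc Hyc]].
  destruct q as [|y' q].
  - exists [c]; split; [reflexivity|split; [now apply incl_cons|now apply fle_single]].
  - destruct IH as [Y [HYl [HYP HqY]]]; [discriminate|intros z Hz; apply Hnear; now right|].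
    exists (c :: Y); split; [simpl; now f_equal|split; [now apply incl_cons|now apply fle_both]].
Qed.

End Nets.

Fixpoint words {A} (n : nat) (P : list A) : list (list A) :=
  match n with
  | O => [[]]
  | S n => flat_map (fun a => map (cons a) (words n P)) P
  end.

Lemma length_words {A} n (P : list A) : length (words n P) = (length P ^ n)%nat.
Proof.
  induction n as [|n IH]; [reflexivity|simpl].
  rewrite (flat_map_constant_length (c := length (words n P))); [now rewrite IH|].
  intros; apply length_map.
Qed.

Lemma in_words {A} n (P : list A) Y : In Y (words n P) <-> length Y = n /\ incl Y P.
Proof.
  revert Y; induction n as [|n IH]; intros Y; simpl.
  - split; [intros [<-|[]]; split; [reflexivity|intros x []]|].
    intros [HY _]; left; symmetry; now apply length_zero_iff_nil.
  - rewrite in_flat_map; split.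
    + intros [a [Ha HY]]; apply in_map_iff in HY as [Z [<- HZ]]; apply IH in HZ as [HZl HZP].
      split; [simpl; now f_equal|now apply incl_cons].
    + intros [HY HYP]; destruct Y as [|a Z]; [discriminate|].
      apply incl_cons_inv in HYP as [Ha HZP].
      exists a; split; [exact Ha|apply in_map, IH; split; [simpl in HY; lia|exact HZP]].
Qed.

Lemma exists_pow2_between x : 1 <= x -> exists n, x <= 2 ^ n <= 2 * x.
Proof.
  intros Hx.
  assert (HK : exists K, x <= 2 ^ K).
  { destruct (INR_unbounded x) as [K HK]; exists K.
    assert (Hlin : forall n, INR n <= 2 ^ n).
    { induction n as [|n IH]; [simpl; lra|].
      assert (1 <= 2 ^ n) by (apply pow_R1_Rle; lra).
      rewrite S_INR; simpl; lra. }
    specialize (Hlin K); lra. }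
  destruct HK as [K HK]; induction K as [|K IH]; [exists 0%nat; simpl in *; lra|].
  destruct (Rle_dec x (2 ^ K)) as [H|H]; [now apply IH|exists (S K); simpl in *; lra].
Qed.

Lemma dyadic_scale s t N : 0 < s -> s < t <= s * 2 ^ N ->
  exists j, (j < N)%nat /\ s * 2 ^ j < t <= s * 2 ^ S j.
Proof.
  intros Hs; induction N as [|N IH]; intros [Hst HtN]; [simpl in HtN; lra|].
  destruct (Rle_dec t (s * 2 ^ N)) as [H|H].
  - destruct IH as [j [Hj Hb]]; [lra|exists j; split; [lia|exact Hb]].
  - exists N; split; [lia|simpl in *; lra].
Qed.

Lemma ln_le_ln x y : 0 < x -> x <= y -> ln x <= ln y.
Proof. intros Hx [Hxy|<-]; [left; now apply ln_increasing|lra]. Qed.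

(* 12 bounds the ratio 2^n / (alpha / eps) of the finest net, and 10 absorbs
   2 n <= 10 log2 (alpha / eps). *)
Definition net_constant (lam : nat) : R := 10 * Rpower 12 (log2 (INR lam)).

Lemma net_constant_pos lam : 0 < net_constant lam.
Proof. unfold net_constant, Rpower; pose proof (exp_pos (log2 (INR lam) * ln 12)); lra. Qed.

Lemma candidate_count_le (lam n k : nat) (A : R) : (1 <= lam)%nat -> 2 <= A -> 2 ^ n <= 12 * A ->
  INR (k * (2 * n) * lam ^ n) <= net_constant lam * INR k * log2 A * Rpower A (log2 (INR lam)).
Proof.
  intros Hlam HA Hn.
  assert (Hln2 : 0 < ln 2) by (pose proof ln_lt_2; lra).
  assert (Hlam_pos : 0 < INR lam) by (apply lt_0_INR; lia).
  assert (HL : 0 <= log2 (INR lam)).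
  { unfold log2; apply Rmult_le_pos; [|left; now apply Rinv_0_lt_compat].
    rewrite <- ln_1; apply ln_le_ln; [lra|apply (le_INR 1), Hlam]. }
  assert (Hsteps : 2 * INR n <= 10 * log2 A).
  { assert (INR n * ln 2 <= ln 12 + ln A).
    { rewrite <- ln_pow, <- ln_mult by lra; apply ln_le_ln; [apply pow_lt; lra|exact Hn]. }
    assert (ln 12 <= 4 * ln 2).
    { replace (4 * ln 2) with (ln (2 ^ 4)) by (rewrite ln_pow by lra; simpl; ring).
      apply ln_le_ln; simpl; lra. }
    assert (ln 2 <= ln A) by (apply ln_le_ln; lra).
    unfold log2; apply Rmult_le_reg_r with (ln 2); [exact Hln2|].
    replace (10 * (ln A / ln 2) * ln 2) with (10 * ln A) by (field; lra); lra. }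
  assert (Hpow : INR lam ^ n <= Rpower 12 (log2 (INR lam)) * Rpower A (log2 (INR lam))).
  { replace (INR lam ^ n) with (Rpower (2 ^ n) (log2 (INR lam))).
    - rewrite Rpower_mult_distr by lra; apply Rle_Rpower_l; [exact HL|split; [apply pow_lt|]; lra].
    - rewrite <- (Rpower_pow n (INR lam) Hlam_pos); unfold Rpower, log2; rewrite ln_pow by lra.
      f_equal; field; lra. }
  rewrite !mult_INR, pow_INR; replace (INR 2) with 2 by reflexivity; unfold net_constant.
  replace (10 * Rpower 12 (log2 (INR lam)) * INR k * log2 A * Rpower A (log2 (INR lam)))
    with (INR k * (10 * log2 A) * (Rpower 12 (log2 (INR lam)) * Rpower A (log2 (INR lam)))) by ring.
  pose proof (pos_INR k); pose proof (pos_INR n).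
  apply Rmult_le_compat; [nra|apply pow_le; lra|apply Rmult_le_compat_l; lra|exact Hpow].
Qed.

Lemma outer_regime_error alpha eps D t x : 2 <= alpha -> 0 < eps < 1 -> 0 <= D ->
  D <= alpha * x -> t <= x + D -> D <= t + x ->
  (t <= eps / (2 * alpha) * D \/ t >= 2 * (alpha + 1) / eps * D) -> t + D <= (1 + eps) * x.
Proof.
  intros Ha He HD HDx Htx HDt [Ht|Ht].
  - assert (eps / (2 * alpha) * D <= eps / 2 * x).
    { replace (eps / 2 * x) with (eps / (2 * alpha) * (alpha * x)) by (field; lra).
      apply Rmult_le_compat_l; [apply Rlt_le, Rdiv_lt_0_compat; lra|exact HDx]. }
    lra.
  - assert (2 * (alpha + 1) * D <= eps * t).
    { replace (2 * (alpha + 1) * D) with (eps * (2 * (alpha + 1) / eps * D)) by (field; lra).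
      apply Rmult_le_compat_l; lra. }
    assert (eps * (t - D) <= eps * x) by (apply Rmult_le_compat_l; lra).
    assert (0 <= (2 * alpha - eps) * D) by (apply Rmult_le_pos; lra).
    nra.
Qed.

Lemma ratio_ge2 alpha eps : 2 <= alpha -> 0 < eps < 1 -> 2 <= alpha / eps.
Proof.
  intros Ha He; apply Rmult_le_reg_r with eps; [lra|].
  unfold Rdiv; rewrite Rmult_assoc, Rinv_l, Rmult_1_r by lra; nra.
Qed.

(* The upper end of the inner regime lies below the coarsest scale [s * 2^(2n)]
   of the multiscale net, [s = eps/(2 alpha) D], once [2^n >= 6 alpha/eps]. *)
Lemma inner_regime_below_scales alpha eps D m : 2 <= alpha -> 0 < eps < 1 -> 0 <= D ->
  6 * (alpha / eps) <= m -> 2 * (alpha + 1) / eps * D <= eps / (2 * alpha) * D * m ^ 2.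
Proof.
  intros Ha He HD Hm.
  assert (HA := ratio_ge2 alpha eps Ha He).
  assert (Hm2 : (6 * (alpha / eps)) ^ 2 <= m ^ 2) by (apply pow_incr; lra).
  assert (HDe : 0 <= D / eps) by (apply Rmult_le_pos; [lra|apply Rlt_le, Rinv_0_lt_compat; lra]).
  apply Rle_trans with (eps / (2 * alpha) * D * (6 * (alpha / eps)) ^ 2).
  - replace (2 * (alpha + 1) / eps * D) with (2 * (alpha + 1) * (D / eps)) by (field; lra).
    replace (eps / (2 * alpha) * D * (6 * (alpha / eps)) ^ 2) with (18 * alpha * (D / eps))
      by (field; lra).
    nra.
  - apply Rmult_le_compat_l; [|exact Hm2].
    apply Rmult_le_pos; [apply Rlt_le, Rdiv_lt_0_compat|]; lra.
Qed.

Section Simplification.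
Context {M : Type} (d : M -> M -> R).
Hypothesis d_nonneg : forall x y, 0 <= d x y.
Hypothesis d_sym : forall x y, d x y = d y x.
Hypothesis d_triangle : forall x y z, d x z <= d x y + d y z.

Lemma multiscale_net lam (Xk : list M) r0 N n : doubling_cover d lam -> 0 < r0 ->
  exists P, (length P <= length Xk * N * lam ^ n)%nat /\
  forall q, q <> [] -> Xk <> [] -> r0 < dF d q Xk <= r0 * 2 ^ N ->
    exists Y, length Y = length q /\ incl Y P /\ 2 ^ n * dF d q Y <= 2 * dF d q Xk.
Proof.
  intros Hdbl Hr0.
  set (centers := list_prod Xk (map (fun j => r0 * 2 ^ S j) (seq 0 N))).
  destruct (covers_family d centers (lam ^ n) (fun s => snd s / 2 ^ n)
              (fun s y => d (fst s) y <= snd s)) as [P [HlP HP]].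
  { intros [x r] Hs; apply dyadic_net; [exact Hdbl|].
    apply in_prod_iff in Hs as [_ Hr]; apply in_map_iff in Hr as [j [<- _]].
    apply Rmult_lt_0_compat; [exact Hr0|apply pow_lt; lra]. }
  exists P; split; [unfold centers in HlP; now rewrite length_prod, length_map, length_seq in HlP|].
  intros q Hq HXk Ht.
  destruct (dyadic_scale r0 (dF d q Xk) N Hr0 Ht) as [j [Hj [Hlow Hup]]].
  set (rj := r0 * 2 ^ S j) in Hup.
  assert (Hnear : forall y, In y q -> exists c, In c P /\ d y c <= rj / 2 ^ n).
  { intros y Hy.
    destruct (frechet_le_vertex d _ _ _ y (frechet_le_dF d d_nonneg q Xk Hq HXk) Hy)
      as [x [Hx Hxy]].
    assert (Hcenter : In (x, rj) centers).
    { apply in_prod; [exact Hx|apply (in_map (fun j => r0 * 2 ^ S j)), in_seq; lia]. }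
    destruct (HP _ Hcenter y) as [c [Hc Hcy]]; [simpl; rewrite d_sym; lra|].
    exists c; split; [exact Hc|rewrite d_sym; exact Hcy]. }
  destruct (snap_to_points d P _ q Hq Hnear) as [Y [HYl [HYP HqY]]].
  exists Y; split; [exact HYl|split; [exact HYP|]].
  apply (dF_le_of_frechet_le d d_nonneg) in HqY.
  assert (H2n : 0 < 2 ^ n) by (apply pow_lt; lra).
  apply Rle_trans with (2 ^ n * (rj / 2 ^ n)); [apply Rmult_le_compat_l; lra|].
  replace (2 ^ n * (rj / 2 ^ n)) with rj by (field; lra).
  unfold rj; simpl; lra.
Qed.

Variables (alpha eps : R) (k : nat) (X Xk : list M).
Hypothesis alpha_ge2 : 2 <= alpha.
Hypothesis eps_range : 0 < eps < 1.
Hypothesis k_pos : (1 <= k)%nat.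
Hypothesis X_neq_nil : X <> [].
Hypothesis Xk_length : length Xk = k.
Hypothesis Xk_approx : forall q, length q = k -> dF d X Xk <= alpha * dF d X q.

Definition outer_regime (q : list M) : Prop :=
  dF d q Xk <= eps / (2 * alpha) * dF d X Xk \/
  dF d q Xk >= 2 * (alpha + 1) / eps * dF d X Xk.

Definition candidate_bound (lam : nat) : R :=
  net_constant lam * INR k * log2 (alpha / eps) * Rpower (alpha / eps) (log2 (INR lam)).

Lemma Xk_neq_nil : Xk <> [].
Proof. exact (neq_nil_of_length Xk k Xk_length k_pos). Qed.

Lemma doubling_constant_ge1 lam : doubling_cover d lam -> (1 <= lam)%nat.
Proof.
  destruct X as [|x X'] eqn:HX; [congruence|].
  apply (doubling_cover_ge1 d lam x (d_nonneg x)).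
Qed.

Lemma candidate_bound_ge lam n : doubling_cover d lam -> 2 ^ n <= 12 * (alpha / eps) ->
  INR (k * (2 * n) * lam ^ n) <= candidate_bound lam.
Proof.
  intros Hdbl Hn; apply candidate_count_le; [exact (doubling_constant_ge1 lam Hdbl)| |exact Hn].
  exact (ratio_ge2 alpha eps alpha_ge2 eps_range).
Qed.

Lemma candidate_curves_pos lam : doubling_cover d lam -> 0 < dF d X Xk ->
  exists C, NoDup C /\ Forall (fun Y => length Y = k) C /\
    INR (length C) <= candidate_bound lam ^ k /\
    forall q, length q = k -> ~ outer_regime q ->
      exists Y, In Y C /\ 3 * alpha * dF d q Y <= eps * dF d q Xk.
Proof.
  intros Hdbl HD.
  pose proof (ratio_ge2 alpha eps alpha_ge2 eps_range) as HA.
  destruct (exists_pow2_between (6 * (alpha / eps))) as [n [Hn1 Hn2]]; [lra|].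
  set (s := eps / (2 * alpha) * dF d X Xk).
  assert (Hs : 0 < s).
  { apply Rmult_lt_0_compat; [apply Rdiv_lt_0_compat|]; lra. }
  destruct (multiscale_net lam Xk s (2 * n) n Hdbl Hs) as [P [HlP HP]].
  set (dec := list_eq_dec (fun a b : M => excluded_middle_informative (a = b))).
  exists (nodup dec (words k P)); split; [apply NoDup_nodup|split; [|split]].
  - apply Forall_forall; intros Y HY; apply nodup_In, in_words in HY; tauto.
  - apply Rle_trans with (INR (length P ^ k)).
    + apply le_INR; rewrite <- length_words.
      apply NoDup_incl_length; [apply NoDup_nodup|intros Y; apply nodup_In].
    + rewrite pow_INR; apply pow_incr; split; [apply pos_INR|].
      apply Rle_trans with (INR (k * (2 * n) * lam ^ n)); [apply le_INR; now rewrite <- Xk_length|].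
      apply candidate_bound_ge; [exact Hdbl|lra].
  - intros q Hq Hinner; apply not_or_and in Hinner as [Hlow Hhigh].
    apply Rnot_le_lt in Hlow; apply Rnot_ge_lt in Hhigh.
    assert (Hscales : dF d q Xk <= s * 2 ^ (2 * n)).
    { rewrite Nat.mul_comm, pow_mult; apply Rlt_le, (Rlt_le_trans _ _ _ Hhigh).
      apply inner_regime_below_scales; [exact alpha_ge2|exact eps_range| |exact Hn1].
      now apply Rlt_le. }
    destruct (HP q (neq_nil_of_length q k Hq k_pos) Xk_neq_nil (conj Hlow Hscales))
      as [Y [HYl [HYP HY]]].
    exists Y; split; [apply nodup_In, in_words; split; [congruence|exact HYP]|].
    assert (HqY : 0 <= dF d q Y).
    { apply dF_nonneg; [exact d_nonneg|apply (neq_nil_of_length q k Hq k_pos)|].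
      apply (neq_nil_of_length Y k); [congruence|exact k_pos]. }
    assert (6 * (alpha / eps) * dF d q Y <= 2 * dF d q Xk).
    { apply Rle_trans with (2 ^ n * dF d q Y); [apply Rmult_le_compat_r; lra|exact HY]. }
    replace (3 * alpha * dF d q Y) with (eps / 2 * (6 * (alpha / eps) * dF d q Y)) by (field; lra).
    replace (eps * dF d q Xk) with (eps / 2 * (2 * dF d q Xk)) by field.
    apply Rmult_le_compat_l; lra.
Qed.

Lemma candidate_curves lam : doubling_cover d lam ->
  exists C, NoDup C /\ Forall (fun Y => length Y = k) C /\
    INR (length C) <= candidate_bound lam ^ k /\
    forall q, length q = k -> ~ outer_regime q ->
      exists Y, In Y C /\ 3 * alpha * dF d q Y <= eps * dF d q Xk.
Proof.
  intros Hdbl.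
  destruct (Rle_lt_or_eq_dec _ _ (dF_nonneg d d_nonneg X Xk X_neq_nil Xk_neq_nil)) as [HD|HD];
    [now apply candidate_curves_pos|].
  exists []; split; [constructor|split; [constructor|split]].
  - apply pow_le, Rle_trans with (INR (k * (2 * 0) * lam ^ 0)); [apply pos_INR|].
    apply candidate_bound_ge; [exact Hdbl|].
    pose proof (ratio_ge2 alpha eps alpha_ge2 eps_range); simpl; lra.
  - intros q Hq Hinner; exfalso; apply Hinner; right.
    rewrite <- HD, Rmult_0_r; apply Rle_ge, dF_nonneg; [exact d_nonneg| |exact Xk_neq_nil].
    exact (neq_nil_of_length q k Hq k_pos).
Qed.

Lemma delta_bounds (C : list (list M)) q :
  Forall (fun Y => length Y = k) C -> length q = k ->
  (~ outer_regime q -> exists Y, In Y C /\ 3 * alpha * dF d q Y <= eps * dF d q Xk) ->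
  (~ outer_regime q -> C <> []) /\
  forall Xstar, ((outer_regime q /\ Xstar = Xk) \/
                 (~ outer_regime q /\ In Xstar C /\
                  forall Y, In Y C -> dF d q Xstar <= dF d q Y)) ->
    dF d q X <= dF d q Xstar + dF d Xstar X <= (1 + eps) * dF d q X.
Proof.
  intros HC Hq Hnear.
  assert (Hq0 : q <> []) by exact (neq_nil_of_length q k Hq k_pos).
  assert (HC0 : forall Y, In Y C -> Y <> []).
  { intros Y HY; rewrite Forall_forall in HC; exact (neq_nil_of_length Y k (HC Y HY) k_pos). }
  assert (Happ : dF d X Xk <= alpha * dF d q X).
  { rewrite (dF_sym d d_nonneg d_sym q X Hq0 X_neq_nil); exact (Xk_approx q Hq). }
  assert (HtX : dF d q Xk <= dF d q X + dF d X Xk)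
    by exact (dF_triangle d d_nonneg d_triangle q X Xk Hq0 X_neq_nil Xk_neq_nil).
  split; [intros Hinner ->; destruct (Hnear Hinner) as [Y [[] _]]|].
  intros Xstar [[Hout ->]|[Hinner [HXs Hmin]]]; split;
    try apply (dF_triangle d d_nonneg d_triangle); auto using Xk_neq_nil.
  - rewrite (dF_sym d d_nonneg d_sym Xk X Xk_neq_nil X_neq_nil).
    apply (outer_regime_error alpha eps (dF d X Xk)); auto.
    + apply dF_nonneg; auto using Xk_neq_nil.
    + rewrite (dF_sym d d_nonneg d_sym q X Hq0 X_neq_nil), Rplus_comm.
      apply dF_triangle; auto using Xk_neq_nil.
  - destruct (Hnear Hinner) as [Y [HY HYnear]]; specialize (Hmin Y HY).
    assert (HXsX : dF d Xstar X <= dF d q Xstar + dF d q X).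
    { rewrite (dF_sym d d_nonneg d_sym q Xstar Hq0 (HC0 _ HXs)).
      apply dF_triangle; auto. }
    assert (HqX : 0 <= dF d q X) by (apply dF_nonneg; auto).
    assert (HqY : 0 <= dF d q Y) by (apply dF_nonneg; auto).
    assert (Hgrow : eps * dF d q Xk <= eps * ((alpha + 1) * dF d q X))
      by (apply Rmult_le_compat_l; lra).
    assert (Hslack : 0 <= eps * dF d q X * (alpha - 2))
      by (apply Rmult_le_pos; [apply Rmult_le_pos|]; lra).
    assert (Hsmall : 3 * alpha * (2 * dF d q Y) <= 3 * alpha * (eps * dF d q X)) by lra.
    apply Rmult_le_reg_l in Hsmall; [lra|lra].
Qed.

End Simplification.

Theorem mainTheorem6 :
  forall lam : nat,
  exists c : R, 0 < c /\
  forall (M : Type) (d : M -> M -> R),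
    is_metric d -> doubling_constant d lam ->
  forall (alpha eps : R) (k m : nat) (X Xk : list M),
    2 <= alpha -> 0 < eps < 1 -> (1 <= k)%nat -> (1 <= m)%nat ->
    length X = m ->
    approx_simplification d alpha k X Xk ->
    let D := dF d X Xk in
    exists C : list (list M),
      NoDup C /\ Forall (fun Y => length Y = k) C /\
      INR (length C) <=
        (c * INR k * log2 (alpha / eps) * Rpower (alpha / eps) (log2 (INR lam))) ^ k /\
      forall q : list M, length q = k ->
        let outer := dF d q Xk <= eps / (2 * alpha) * D \/
                     dF d q Xk >= 2 * (alpha + 1) / eps * D in
        (~ outer -> C <> []) /\
        forall Xstar : list M,
          ((outer /\ Xstar = Xk) \/
           (~ outer /\ In Xstar C /\ forall Y, In Y C -> dF d q Xstar <= dF d q Y)) ->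
          let Delta := dF d q Xstar + dF d Xstar X in
          dF d q X <= Delta <= (1 + eps) * dF d q X.
Proof.
  intros lam; exists (net_constant lam); split; [apply net_constant_pos|].
  intros M d [Hpos [_ [Hsym Htri]]] [Hdbl _] alpha eps k m X Xk Ha He Hk Hm HX [HXk Happ] D.
  assert (HX0 : X <> []) by exact (neq_nil_of_length X m HX Hm).
  destruct (candidate_curves d Hpos Hsym alpha eps k X Xk Ha He Hk HX0 HXk Happ lam Hdbl)
    as [C [HCnd [HCk [HCcard HCnear]]]].
  exists C; split; [exact HCnd|split; [exact HCk|split; [exact HCcard|]]].
  intros q Hq.
  exact (delta_bounds d Hpos Hsym Htri alpha eps k X Xk Ha He Hk HX0 HXk Happ C q HCk Hq
           (HCnear q Hq)).
Qed.
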